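(* Let $X$ be a finite discrete space with at least two elements, $\Gamma$ a nonempty countable set, and $\varphi:\Gamma\to\Gamma$ one-to-one without periodic points. Then $X^\Gamma$ has an uncountable subset $M$ consisting of transitive points of $\sigma_\varphi$, and there exists $r>0$ such that for all distinct $x,y\in M$: $F^*_{xy}(t)=1$ for every $t>0$, and $F_{xy}(r)=0$.
   Context: $X^\Gamma$ has the product topology and a fixed compatible metric $d$; $\sigma_\varphi((x_\alpha)_{\alpha\in\Gamma})=(x_{\varphi(\alpha)})_{\alpha\in\Gamma}$. A point $x$ is a transitive point if $\{\sigma_\varphi^n(x):n\ge0\}$ is dense in $X^\Gamma$. With $f=\sigma_\varphi$, $\xi(x,y,t,n)=\#\{i\in\{0,\dots,n-1\}:d(f^i(x),f^i(y))<t\}$, $F_{xy}(t)=\liminf_n\xi(x,y,t,n)/n$, $F^*_{xy}(t)=\limsup_n\xi(x,y,t,n)/n$. *)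

From HB Require Import structures.
From mathcomp Require Import all_boot all_order all_algebra.
From mathcomp Require Import all_classical all_reals.
From mathcomp Require Import topology normedtype sequences.
Set Implicit Arguments. Unset Strict Implicit. Unset Printing Implicit Defensive.
Import Order.TTheory GRing.Theory Num.Theory.
Local Open Scope classical_set_scope.
Local Open Scope ring_scope.

(* Product topology on X^Gamma with X discrete: U is open iff around each of
   its points it contains a cylinder determined by finitely many coordinates. *)
Definition prod_open (X : Type) (Γ : eqType) (U : set (Γ -> X)) : Prop :=
  forall x, U x -> exists S : seq Γ,
    forall y, (forall a, a \in S -> y a = x a) -> U y.

Definition is_metric (R : realType) (T : Type) (d : T -> T -> R) : Prop :=
  (forall x y, 0 <= d x y) /\ (forall x y, d x y = 0 <-> x = y) /\
  (forall x y, d x y = d y x) /\ (forall x y z, d x z <= d x y + d y z).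

Definition metric_open (R : realType) (T : Type) (d : T -> T -> R) (U : set T) : Prop :=
  forall x, U x -> exists2 e : R, 0 < e & forall y, d x y < e -> U y.

Definition compatible_metric (R : realType) (X : Type) (Γ : eqType) (d : (Γ -> X) -> (Γ -> X) -> R) : Prop :=
  is_metric d /\ (forall U, metric_open d U <-> prod_open U).

Definition shift (X Γ : Type) (φ : Γ -> Γ) (x : Γ -> X) : Γ -> X := fun a => x (φ a).

Definition has_no_periodic_points (Γ : Type) (φ : Γ -> Γ) : Prop :=
  forall (n : nat) (a : Γ), (0 < n)%N -> iter n φ a <> a.

Definition transitive_point (X : Type) (Γ : eqType) (φ : Γ -> Γ) (x : Γ -> X) : Prop :=
  forall U : set (Γ -> X), prod_open U -> U !=set0 ->
    exists n : nat, U (iter n (shift φ) x).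

Definition xi (R : realType) (X Γ : Type) (φ : Γ -> Γ)
  (d : (Γ -> X) -> (Γ -> X) -> R) (x y : Γ -> X) (t : R) (n : nat) : nat :=
  count (fun i => d (iter i (shift φ) x) (iter i (shift φ) y) < t) (iota 0 n).

Definition Fl (R : realType) (X Γ : Type) (φ : Γ -> Γ)
  (d : (Γ -> X) -> (Γ -> X) -> R) (x y : Γ -> X) (t : R) : R :=
  limn_inf (fun n : nat => (xi φ d x y t n)%:R / n%:R : R).

Definition Fu (R : realType) (X Γ : Type) (φ : Γ -> Γ)
  (d : (Γ -> X) -> (Γ -> X) -> R) (x y : Γ -> X) (t : R) : R :=
  limn_sup (fun n : nat => (xi φ d x y t n)%:R / n%:R : R).

(* Countably many stages of three
   kinds suffice: copying any finite word onto some [iter N φ] of an initial segment makes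
   each x_t transitive; colouring a long window constantly makes any two x_t agree near the
   constant point on a window filling almost all of an initial time interval, so F* = 1;
   colouring by the bit t k makes x_t and x_t' stay d(c0, c1)/3 apart (c0, c1 read as
   constant points) on such windows whenever t k <> t' k, so F(d(c0, c1)/3) = 0.
   Finally t |-> x_t is injective, and nat -> bool is uncountable. *)

From Pilot Require Import Defs.
From HB Require Import structures.
From mathcomp Require Import all_boot all_order all_algebra.
From mathcomp Require Import all_classical all_reals.
From mathcomp Require Import topology normedtype sequences.
From mathcomp Require Import interval_inference lra.
Import Order.TTheory GRing.Theory Num.Theory.
Local Open Scope classical_set_scope.
Local Open Scope ring_scope.

Section Orbits.
Context {Γ : eqType} {φ : Γ -> Γ}.

Lemma iter_inj n : injective φ -> injective (iter n φ).
Proof. by move=> φ_inj; elim: n => [|n IHn] a b //= /φ_inj /IHn. Qed.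

Hypothesis φ_aper : has_no_periodic_points φ.

Lemma iter_eventually_neq a b : \forall n \near \oo, iter n φ a != b.
Proof.
have [[n0 <-]|no_hit] := pselect (exists n0, iter n0 φ a = b); last first.
  by apply: nearW => n; apply/eqP => hit; apply: no_hit; exists n.
exists n0.+1 => // n /= n0_lt_n; apply/eqP.
rewrite -(subnK (ltnW n0_lt_n)) iterD.
by apply: φ_aper; rewrite subn_gt0.
Qed.

Lemma iter_eventually_notin (S K : seq Γ) :
  \forall n \near \oo, {in S, forall a, iter n φ a \notin K}.
Proof.
have aK a : \forall n \near \oo, iter n φ a \notin K.
  elim: K => [|b K IHK]; first exact: nearW.
  apply: filterS2 (iter_eventually_neq a b) IHK => n nb nK.
  by rewrite in_cons negb_or nb.
elim: S => [|a S IHS]; first exact: nearW.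
apply: filterS2 (aK a) IHS => n naK nS c.
by rewrite in_cons => /predU1P[->|/nS].
Qed.

End Orbits.

Lemma iter_shift (X Γ : Type) (φ : Γ -> Γ) n (x : Γ -> X) :
  iter n (Defs.shift φ) x = x \o iter n φ.
Proof.
elim: n => // n IHn; apply: funext => a.
by rewrite iterS IHn /Defs.shift /= -iterSr.
Qed.

Lemma injective_range_not_countable (T : Type) (F : (nat -> bool) -> T) :
  injective F -> ~ countable (range F).
Proof.
move=> F_inj /countable_injP[f f_inj].
pose g n := xget (fun=> false) [set s | f (F s) = n].
pose diag n := ~~ g n n.
have g_diag : g (f (F diag)) = diag.
  apply: xget_unique => // s /f_inj fs; apply: F_inj; apply: fs; exact: mem_set.
set n := f (F diag).
have : g n n = ~~ g n n := congr1 (fun s => s n) g_diag.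
by case: (g n n).
Qed.

(* A run [N, N + (j+1)(N+1)) covers all but a fraction < 1/(j+1) of [0, N + (j+1)(N+1)). *)
Definition long_runs (P : pred nat) : Prop :=
  forall j0, exists j N, (j0 <= j)%N /\
    forall i, (N <= i < N + j.+1 * N.+1)%N -> P i.

Section Frequencies.
Variable R : realType.
Implicit Types (u : R^nat) (P : pred nat).

Lemma sups_eq_cst {u l} : (forall n, u n <= l) ->
    (forall e, 0 < e -> forall B, exists2 n, (B <= n)%N & l - e <= u n) ->
  sups u = fun=> l.
Proof.
move=> u_le freq; apply: funext => B /=.
have tail_ub : ubound (sdrop u B) l by move=> _ [n _ <-].
have tail_ne : sdrop u B !=set0 by exists (u B); exists B => /=.
apply/le_anti; rewrite ge_sup //=.
apply/ler_addgt0Pr => e e_gt0; have [n Bn le_un] := freq e e_gt0 B.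
rewrite -lerBlDr (le_trans le_un) //.
by apply: ub_le_sup; [exists l | exists n].
Qed.

Lemma limn_sup_eq u l : (forall n, u n <= l) ->
    (forall e, 0 < e -> forall B, exists2 n, (B <= n)%N & l - e <= u n) ->
  limn_sup u = l.
Proof.
move=> u_le freq; rewrite /limn_sup (sups_eq_cst u_le freq).
by apply: cvg_lim; [exact: Rhausdorff | exact: cvg_cst].
Qed.

Lemma limn_inf_eq u l : (forall n, l <= u n) ->
    (forall e, 0 < e -> forall B, exists2 n, (B <= n)%N & u n <= l + e) ->
  limn_inf u = l.
Proof.
move=> le_u freq; rewrite /limn_inf -[u](opprK u) infsN.
rewrite (@sups_eq_cst (- u) (- l)) => [|n|e e_gt0 B].
- rewrite (_ : - _ = fun=> l); last by apply: funext => n /=; rewrite opprK.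
  by apply: cvg_lim; [exact: Rhausdorff | exact: cvg_cst].
- by rewrite lerN2.
- by have [n Bn le_un] := freq e e_gt0 B; exists n; rewrite // -opprD lerN2.
Qed.

Definition count_frac P n : R := (count P (iota 0 n))%:R / n%:R.

Lemma count_frac_ge0 P n : 0 <= count_frac P n.
Proof. by rewrite divr_ge0. Qed.

Lemma count_frac_le1 P n : count_frac P n <= 1.
Proof.
case: n => [|n]; first by rewrite /count_frac invr0 mulr0.
by rewrite ler_pdivrMr ?ltr0n // mul1r ler_nat (leq_trans (count_size _ _)) ?size_iota.
Qed.

Lemma count_frac_predC P n : (0 < n)%N -> count_frac (predC P) n = 1 - count_frac P n.
Proof.
move=> n_gt0; rewrite /count_frac.
have -> : count (predC P) (iota 0 n) = (n - count P (iota 0 n))%N.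
  by rewrite -{2}(size_iota 0 n) -(count_predC P) addKn.
rewrite natrB ?mulrBl ?divff ?pnatr_eq0 -?lt0n //.
by rewrite (leq_trans (count_size _ _)) ?size_iota.
Qed.

Lemma count_frac_long_run {P j N} : (forall i, (N <= i < N + j.+1 * N.+1)%N -> P i) ->
  1 - j.+1%:R^-1 <= count_frac P (N + j.+1 * N.+1).
Proof.
set L := (j.+1 * N.+1)%N => run.
have L_le_count : (L <= count P (iota 0 (N + L)))%N.
  rewrite iotaD count_cat add0n (@eq_in_count _ _ predT (iota N L)).
    by rewrite count_predT size_iota leq_addl.
  by move=> i; rewrite mem_iota => /run.
apply: le_trans (_ : L%:R / (N + L)%:R <= _); last first.
  by rewrite ler_pM2r ?ler_nat // invr_gt0 ltr0n addn_gt0 muln_gt0 orbT.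
rewrite ler_pdivlMr ?ltr0n ?addn_gt0 ?muln_gt0 ?orbT // mulrBl mul1r.
rewrite lerBlDr -lerBlDl /L natrD natrM addrK ler_pdivlMl ?ltr0n //.
by rewrite -!natrM -natrD ler_nat (leq_trans _ (leq_addl _ _)) // leq_mul2l leqnSn orbT.
Qed.

Lemma long_runs_frequently {P} : long_runs P ->
  forall e, 0 < e -> forall B, exists2 n, (B < n)%N & 1 - e <= count_frac P n.
Proof.
move=> runs e e_gt0 B.
have [j0 _ j0_small] := near_infty_natSinv_lt (PosNum e_gt0).
have [j [N [j_ge run]]] := runs (maxn B j0).
exists (N + j.+1 * N.+1)%N.
  rewrite (leq_trans _ (leq_addl _ _)) // (leq_trans _ (leq_pmulr _ (ltn0Sn N))) //.
  by rewrite ltnS (leq_trans (leq_maxl _ _) j_ge).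
apply: (le_trans _ (count_frac_long_run run)); rewrite lerD2l lerN2 ltW //.
by apply: j0_small; rewrite /= (leq_trans (leq_maxr B _)).
Qed.

Lemma long_runs_limn_sup P : long_runs P -> limn_sup (count_frac P) = 1.
Proof.
move=> runs; apply: limn_sup_eq => [n|e e_gt0 B]; first exact: count_frac_le1.
by have [n Bn le_frac] := long_runs_frequently runs _ e_gt0 B; exists n => //; exact: ltnW.
Qed.

Lemma long_runs_limn_inf P : long_runs (predC P) -> limn_inf (count_frac P) = 0.
Proof.
move=> runs; apply: limn_inf_eq => [n|e e_gt0 B]; first exact: count_frac_ge0.
have [n Bn le_frac] := long_runs_frequently runs _ e_gt0 B; exists n => //; first exact: ltnW.
by move: le_frac; rewrite count_frac_predC ?(leq_ltn_trans _ Bn) // add0r lerD2l lerN2.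
Qed.

End Frequencies.

Section CompatibleMetric.
Context {R : realType} {X : Type} {Γ : eqType} {d : (Γ -> X) -> (Γ -> X) -> R}.
Hypothesis d_compat : compatible_metric d.

Let d_ge0 := d_compat.1.1.
Let d_eq0 := d_compat.1.2.1.
Let d_sym := d_compat.1.2.2.1.
Let d_tri := d_compat.1.2.2.2.

Lemma dist_gt0 x y : x <> y -> 0 < d x y.
Proof. by move=> xy; rewrite lt_neqAle d_ge0 andbT eq_sym; apply/eqP => /d_eq0. Qed.

Lemma ball_cylinder z {e} : 0 < e -> exists S : seq Γ, forall y, {in S, y =1 z} -> d z y < e.
Proof.
move=> e_gt0; have ball_open : metric_open d [set y | d z y < e].
  move=> y zy; exists (e - d z y) => [|w yw]; first by rewrite subr_gt0.
  by rewrite /= (le_lt_trans (d_tri z y w)) // -ltrBrDl.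
have z_ball : d z z < e by rewrite (d_eq0 z z).2.
by have [S zS] := (d_compat.2 _).1 ball_open z z_ball; exists S.
Qed.

Lemma cylinder_close z {e} : 0 < e ->
  exists S : seq Γ, forall x y, {in S, x =1 z} -> {in S, y =1 z} -> d x y < e.
Proof.
move=> e_gt0; have [S zS] := ball_cylinder z (divr_gt0 e_gt0 (ltr0Sn _ 1)).
exists S => x y /zS zx /zS zy; rewrite (le_lt_trans (d_tri x z y)) // d_sym.
by rewrite [e](splitr e) ltrD.
Qed.

Lemma cylinder_apart z1 z2 :
  exists S : seq Γ, forall x y, {in S, x =1 z1} -> {in S, y =1 z2} -> d z1 z2 / 3 <= d x y.
Proof.
have [z12_0|z12_neq0] := eqVneq (d z1 z2) 0.
  by exists [::] => x y _ _; rewrite z12_0 mul0r d_ge0.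
have third_gt0 : 0 < d z1 z2 / 3 by rewrite divr_gt0 // lt_neqAle eq_sym z12_neq0 d_ge0.
have [S1 z1S1] := ball_cylinder z1 third_gt0.
have [S2 z2S2] := ball_cylinder z2 third_gt0.
exists (S1 ++ S2) => x y z1x z2y.
have /z1S1 z1x_near : {in S1, x =1 z1} by move=> a aS; apply: z1x; rewrite mem_cat aS.
have /z2S2 z2y_near : {in S2, y =1 z2} by move=> a aS; apply: z2y; rewrite mem_cat aS orbT.
have := d_tri z1 x z2; have := d_tri x y z2; rewrite (d_sym y z2).
lra.
Qed.

End CompatibleMetric.

(* [Agree] stages give F* = 1, [Split k] stages separate points differing at bit k,
   [Visit] stages give transitivity; the stages enumerate all tasks through [unpickle]. *)
Inductive task (T : Type) := Agree of nat | Split of nat & nat | Visit of nat & seq T.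
Arguments Agree {T}.
Arguments Split {T}.
Arguments Visit {T}.

Definition task_code T (τ : task T) : nat + nat * nat + nat * seq T :=
  match τ with
  | Agree j => inl (inl j) | Split k j => inl (inr (k, j)) | Visit j w => inr (j, w)
  end.

Definition task_decode T (c : nat + nat * nat + nat * seq T) : task T :=
  match c with
  | inl (inl j) => Agree j | inl (inr (k, j)) => Split k j | inr (j, w) => Visit j w
  end.

Lemma task_codeK T : cancel (@task_code T) (@task_decode T). Proof. by case. Qed.

HB.instance Definition _ (T : countType) := Countable.copy (task T) (can_type (@task_codeK T)).

Definition task_size {T} (τ : task T) : nat :=
  match τ with Agree j | Split _ j | Visit j _ => j end.

Section Construction.
Context {X : finType} {Γ : countType} {φ : Γ -> Γ} {c0 c1 : X}.

Definition initial_seg k : seq Γ := pmap pickle_inv (iota 0 k).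

Lemma mem_initial_seg a k : (a \in initial_seg k) = (pickle a < k)%N.
Proof.
rewrite mem_pmap; apply/mapP/idP => [[n n_lt_k a_n]|a_lt_k].
  by have := @pickle_invK Γ n; rewrite -a_n /= => ->; move: n_lt_k; rewrite mem_iota.
by exists (pickle a); rewrite ?pickleK_inv // mem_iota.
Qed.

Lemma initial_seg_exhaust (S : seq Γ) : \forall k \near \oo, {subset S <= initial_seg k}.
Proof.
exists (\max_(a <- S) pickle a).+1 => // k /= S_lt_k a aS.
by rewrite mem_initial_seg (leq_ltn_trans _ S_lt_k) // (leq_bigmax_seq _ aS isT).
Qed.

Definition window j N : seq Γ :=
  [seq iter n φ a | n <- iota N (j.+1 * N.+1), a <- initial_seg j].

Definition escape_time (S K : seq Γ) : nat :=
  xget 0 [set N | forall n, (N <= n)%N -> {in S, forall a, iter n φ a \notin K}].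

Definition stage m : task X := odflt (Agree 0) (unpickle m).

Lemma stage_pickle τ : stage (pickle τ) = τ.
Proof. by rewrite /stage pickleK. Qed.

Fixpoint used m : seq Γ :=
  if m is m'.+1 then
    let j := task_size (stage m') in
    used m' ++ window j (escape_time (initial_seg j) (used m'))
  else [::].

Definition start m := escape_time (initial_seg (task_size (stage m))) (used m).

Definition block m := window (task_size (stage m)) (start m).

Lemma usedS m : used m.+1 = used m ++ block m.
Proof. by []. Qed.

Definition colour (t : nat -> bool) (τ : task X) (N : nat) (b : Γ) : X :=
  match τ with
  | Agree _ => c0
  | Split k _ => if t k then c1 else c0
  | Visit j w => nth c0 w (index b (map (iter N φ) (initial_seg j)))
  end.

(* On points outside every block, [xget] returns 0 and the value is irrelevant. *)
Definition point (t : nat -> bool) (b : Γ) : X :=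
  let m := xget 0 [set m | b \in block m] in colour t (stage m) (start m) b.

Hypotheses (φ_inj : injective φ) (φ_aper : has_no_periodic_points φ).

Lemma escape_timeP S K n : (escape_time S K <= n)%N -> {in S, forall a, iter n φ a \notin K}.
Proof.
have [N _ NSK] := iter_eventually_notin φ_aper S K.
have : exists N, forall n, (N <= n)%N -> {in S, forall a, iter n φ a \notin K}.
  by exists N.
by move=> /(xgetPex 0); apply.
Qed.

Lemma block_used {m m'} : (m' < m)%N -> {subset block m' <= used m}.
Proof.
elim: m => // m IHm; rewrite ltnS leq_eqVlt => /predU1P[-> | m'_lt_m] b b_m'.
  by rewrite usedS mem_cat b_m' orbT.
by rewrite usedS mem_cat IHm.
Qed.

Lemma block_notin_used {m} : {in block m, forall b, b \notin used m}.
Proof.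
move=> _ /allpairsP[[n a] [n_in a_in ->]].
by move: n_in; rewrite mem_iota => /andP[/escape_timeP avoid _]; apply: avoid.
Qed.

Lemma block_disjoint m m' b : b \in block m -> b \in block m' -> m = m'.
Proof.
wlog m_le_m' : m m' / (m <= m')%N => [hwlog|b_m b_m'].
  by case/orP: (leq_total m m') => le bm bm'; [|apply/esym]; apply: hwlog.
apply/eqP; rewrite eqn_leq m_le_m' leqNgt; apply/negP => m_lt_m'.
by move: (block_notin_used _ b_m'); rewrite (block_used m_lt_m' _ b_m).
Qed.

Lemma point_block t {m b} : b \in block m -> point t b = colour t (stage m) (start m) b.
Proof.
move=> b_m; rewrite /point (xget_unique 0 (P := [set m | b \in block m]) b_m) //.
by move=> m' b_m'; apply: block_disjoint b_m' b_m.
Qed.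

Lemma point_window t {τ n a} : let N := start (pickle τ) in
  (N <= n < N + (task_size τ).+1 * N.+1)%N -> a \in initial_seg (task_size τ) ->
  point t (iter n φ a) = colour t τ N (iter n φ a).
Proof.
move=> N n_in a_in.
have n_a_in : iter n φ a \in block (pickle τ).
  by rewrite /block stage_pickle; apply: allpairs_f; rewrite // mem_iota.
by rewrite (point_block t n_a_in) stage_pickle.
Qed.

Lemma point_start t {τ a} : a \in initial_seg (task_size τ) ->
  let N := start (pickle τ) in point t (iter N φ a) = colour t τ N (iter N φ a).
Proof.
move=> a_in N; apply: point_window a_in.
by rewrite leqnn -{1}[N]addn0 ltn_add2l muln_gt0.
Qed.

Lemma point_visit t j (z : Γ -> X) a : a \in initial_seg j ->
  point t (iter (start (pickle (Visit j (map z (initial_seg j))))) φ a) = z a.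
Proof.
move=> a_in; rewrite point_start //= index_map; last exact: iter_inj.
by rewrite (nth_map a) ?index_mem ?nth_index.
Qed.

Lemma point_inj (a0 : Γ) : c0 != c1 -> injective point.
Proof.
move=> c01 t t' tt'; apply: funext => k; apply/eqP; apply: contraNT c01 => tk.
set τ : task X := Split k (pickle a0).+1.
have a0_in : a0 \in initial_seg (task_size τ) by rewrite mem_initial_seg.
have := congr1 (fun x => x (iter (start (pickle τ)) φ a0)) tt'.
rewrite /= (point_start t a0_in) (point_start t' a0_in) /=.
by move: tk; case: (t k); case: (t' k) => // _ ->.
Qed.

Lemma point_transitive t : transitive_point φ (point t).
Proof.
move=> U U_open [z Uz]; have [S zS] := U_open z Uz.
have [K _ SK] := initial_seg_exhaust S.
exists (start (pickle (Visit K (map z (initial_seg K))))); apply: zS => a aS.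
by rewrite iter_shift /= point_visit // (SK K (leqnn K)).
Qed.

Context {R : realType} {d : (Γ -> X) -> (Γ -> X) -> R}.
Hypothesis d_compat : compatible_metric d.

Lemma long_runs_close t t' e : 0 < e ->
  long_runs (fun i =>
    d (iter i (Defs.shift φ) (point t)) (iter i (Defs.shift φ) (point t')) < e).
Proof.
move=> e_gt0 j0.
have [S closeS] := cylinder_close d_compat (fun=> c0) e_gt0.
have [K _ SK] := initial_seg_exhaust S.
pose j := maxn j0 K; pose N := start (pickle (Agree j : task X)).
exists j, N; split=> [|i i_in]; first exact: leq_maxl.
have S_j : {subset S <= initial_seg j} := SK j (leq_maxr j0 K).
by rewrite !iter_shift; apply: closeS => a /S_j a_j /=; rewrite (point_window _ i_in a_j).
Qed.

Lemma long_runs_apart t t' : t <> t' ->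
  long_runs (predC (fun i =>
    d (iter i (Defs.shift φ) (point t)) (iter i (Defs.shift φ) (point t'))
      < d (fun=> c0) (fun=> c1) / 3)).
Proof.
move=> tt' j0; have d_sym : forall x y, d x y = d y x := d_compat.1.2.2.1.
have [k /eqP tk] : exists k, t k <> t' k by apply/existsNP => tt'_eq; apply/tt'/funext.
have [S apartS] := cylinder_apart d_compat (fun=> c0) (fun=> c1).
have [K _ SK] := initial_seg_exhaust S.
pose j := maxn j0 K; pose N := start (pickle (Split k j : task X)).
exists j, N; split=> [|i i_in]; first exact: leq_maxl.
have S_j : {subset S <= initial_seg j} := SK j (leq_maxr j0 K).
have colour_i t2 : {in S, point t2 \o iter i φ =1 fun=> if t2 k then c1 else c0}.
  by move=> a /S_j a_j /=; rewrite (point_window _ i_in a_j).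
rewrite /= -leNgt !iter_shift.
move: tk (colour_i t) (colour_i t'); case: (t k); case: (t' k) => // _ x_near y_near.
  by rewrite [leRHS]d_sym; apply: apartS.
exact: apartS.
Qed.

End Construction.

Arguments point {X Γ} φ c0 c1 t b.

Theorem lemma5p2 (R : realType) (X : finType) (Γ : countType) (a0 : Γ)
  (φ : Γ -> Γ) (d : (Γ -> X) -> (Γ -> X) -> R) :
  (1 < #|X|)%N -> injective φ -> has_no_periodic_points φ ->
  compatible_metric d ->
  exists M : set (Γ -> X),
    ~ countable M /\ (forall x, M x -> transitive_point φ x) /\
    exists2 r : R, 0 < r &
      forall x y, M x -> M y -> x <> y ->
        (forall t : R, 0 < t -> Fu φ d x y t = 1) /\ Fl φ d x y r = 0.
Proof.
move=> X_gt1 φ_inj φ_aper d_compat.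
have [c0 [c1 [_ _ c01]]] := card_gt1P X_gt1.
exists (range (point φ c0 c1)); split.
  exact/injective_range_not_countable/(point_inj φ_aper a0 c01).
split; first by move=> _ [t _ <-]; apply: point_transitive.
exists (d (fun=> c0) (fun=> c1) / 3).
  rewrite divr_gt0 // (dist_gt0 d_compat) // => /(congr1 (fun x => x a0)) /eqP.
  by apply/negP.
move=> _ _ [t _ <-] [t' _ <-] xt_neq_xt'; split=> [e e_gt0|].
  exact/long_runs_limn_sup/(long_runs_close φ_aper d_compat).
apply/long_runs_limn_inf/(long_runs_apart φ_aper d_compat) => tt'.
by apply: xt_neq_xt'; rewrite tt'.
Qed.
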